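(* Let $U_n\subset C^n([a,b],\mathbb{K})$ (with $\mathbb{K}=\mathbb{R}$ or $\mathbb{C}$, $a<b$) be a subspace of dimension $n+1$ possessing a non-negative Bernstein basis $p_{n,0},\dots,p_{n,n}$ for $\{a,b\}$. Suppose $f_0,f_1\in U_n$ are such that $f_0>0$ on $[a,b]$ and $f_1/f_0$ is strictly increasing on $[a,b]$, and write $f_0=\sum_{k=0}^n\beta_kp_{n,k}$, $f_1=\sum_{k=0}^n\gamma_kp_{n,k}$. Then there exist points $t_0,\dots,t_n\in[a,b]$ and positive coefficients $\alpha_0,\dots,\alpha_n$ such that the operator $B_nf=\sum_{k=0}^nf(t_k)\alpha_kp_{n,k}$ satisfies $B_nf_0=f_0$ and $B_nf_1=f_1$ if and only if $\beta_k>0$ for all $k$ and $$\frac{f_1(a)}{f_0(a)}=\frac{\gamma_0}{\beta_0}\le\frac{\gamma_k}{\beta_k}\le\frac{\gamma_n}{\beta_n}=\frac{f_1(b)}{f_0(b)}\quad\text{for all }k=0,\dots,n.$$ Moreover, such points and coefficients, when they exist, are unique.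
   Context: A function $f\in C^m([a,b],\mathbb{K})$ has a zero of order $k$ at $c$ if $f(c)=\dots=f^{(k-1)}(c)=0$ and $f^{(k)}(c)\ne0$ (one-sided derivatives at endpoints). For an $(m+1)$-dimensional space $V\subset C^m([a,b],\mathbb{K})$, a Bernstein basis for $\{a,b\}$ is a system $p_{m,0},\dots,p_{m,m}$ in $V$ such that each $p_{m,k}$ has a zero of order exactly $k$ at $a$ and of order exactly $m-k$ at $b$ (it is a basis of $V$). It is non-negative if each $p_{m,k}$ is real-valued and $\ge0$ on $[a,b]$. *)

From mathcomp Require Import all_boot all_order all_algebra.
From mathcomp Require Import reals.
From mathcomp.real_closed Require Export complex.
Set Implicit Arguments. Unset Strict Implicit. Unset Printing Implicit Defensive.
Import Order.TTheory GRing.Theory Num.Theory.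
Local Open Scope ring_scope.

Section Defs.
(* R : the reals; K : the scalar field (R or R[i]); emb : the inclusion R -> K.
   Functions on [a,b] are modelled as maps R -> K, only their values on
   [a,b] matter. *)
Variables (R : realType) (K : numFieldType) (emb : R -> K).

Definition is_deriv_on (a b : R) (g g' : R -> K) : Prop :=
  forall x, a <= x <= b ->
  forall e : R, 0 < e -> exists2 d : R, 0 < d &
    forall y, a <= y <= b -> 0 < `|y - x| < d ->
      `|(g y - g x) / emb (y - x) - g' x| < emb e.

Definition cont_on (a b : R) (g : R -> K) : Prop :=
  forall x, a <= x <= b ->
  forall e : R, 0 < e -> exists2 d : R, 0 < d &
    forall y, a <= y <= b -> `|y - x| < d -> `|g y - g x| < emb e.

Definition deriv_chain (a b : R) (m : nat) (f : R -> K) (D : nat -> R -> K) :=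
  D 0%N = f /\ forall j, (j < m)%N -> is_deriv_on a b (D j) (D j.+1).

Definition Cm_on (a b : R) (m : nat) (f : R -> K) : Prop :=
  exists D, deriv_chain a b m f D /\ forall j, (j <= m)%N -> cont_on a b (D j).

(* f has a zero of order k at c: f(c) = ... = f^(k-1)(c) = 0, f^(k)(c) <> 0.
   (For a < b the derivatives on [a,b] are uniquely determined.) *)
Definition zero_of_order (a b : R) (f : R -> K) (c : R) (k : nat) : Prop :=
  exists D, deriv_chain a b k f D /\
    (forall j, (j < k)%N -> D j c = 0) /\ D k c != 0.

(* p_{n,0},...,p_{n,n} is a non-negative Bernstein basis for {a,b} of the
   (n+1)-dimensional space U_n := span_K(p_{n,k}) in C^n([a,b],K). *)
Definition nonneg_bernstein_basis (a b : R) (n : nat) (p : 'I_n.+1 -> R -> K) :=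
  [/\ (forall k, Cm_on a b n (p k)),
      (forall c : 'I_n.+1 -> K,
          (forall x, a <= x <= b -> \sum_k c k * p k x = 0) -> forall k, c k = 0),
      (forall k : 'I_n.+1, zero_of_order a b (p k) a k),
      (forall k : 'I_n.+1, zero_of_order a b (p k) b (n - k)%N) &
      (* real-valued and non-negative on [a,b] *)
      (forall k x, a <= x <= b -> 0 <= p k x)].

Definition reproduces (a b : R) (n : nat) (p : 'I_n.+1 -> R -> K)
    (t : 'I_n.+1 -> R) (alpha : 'I_n.+1 -> K) (f : R -> K) : Prop :=
  forall x, a <= x <= b -> \sum_k f (t k) * alpha k * p k x = f x.

Definition admissible (a b : R) (n : nat) (p : 'I_n.+1 -> R -> K)
    (f0 f1 : R -> K) (t : 'I_n.+1 -> R) (alpha : 'I_n.+1 -> K) : Prop :=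
  [/\ forall k, a <= t k <= b,
      forall k, 0 < alpha k,
      reproduces a b p t alpha f0 &
      reproduces a b p t alpha f1].

Definition theorem2_stmt : Prop :=
  forall (a b : R) (n : nat) (p : 'I_n.+1 -> R -> K)
         (f0 f1 : R -> K) (beta gamma : 'I_n.+1 -> K),
  a < b ->
  nonneg_bernstein_basis a b p ->
  (forall x, a <= x <= b -> f0 x = \sum_k beta k * p k x) ->
  (forall x, a <= x <= b -> f1 x = \sum_k gamma k * p k x) ->
  (forall x, a <= x <= b -> 0 < f0 x) ->
  (forall x y, a <= x -> x < y -> y <= b -> f1 x / f0 x < f1 y / f0 y) ->
  ((exists t alpha, admissible a b p f0 f1 t alpha) <->
     [/\ forall k, 0 < beta k,
         f1 a / f0 a = gamma ord0 / beta ord0,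
         gamma ord_max / beta ord_max = f1 b / f0 b &
         forall k, gamma ord0 / beta ord0 <= gamma k / beta k <=
                   gamma ord_max / beta ord_max])
  /\
  (forall t alpha t' alpha',
     admissible a b p f0 f1 t alpha -> admissible a b p f0 f1 t' alpha' ->
     t = t' /\ alpha = alpha').

End Defs.

From mathcomp Require Import all_boot all_order all_algebra.
From mathcomp Require Import reals.
From mathcomp.real_closed Require Import complex.
From mathcomp Require Import boolp classical_sets topology normedtype.
Set Implicit Arguments. Unset Strict Implicit. Unset Printing Implicit Defensive.
Import Order.TTheory GRing.Theory Num.Theory.
Import numFieldNormedType.Exports.
Local Open Scope classical_set_scope.
Local Open Scope ring_scope.

(* Comparing coefficients in the basis turns B_n f0 = f0 and B_n f1 = f1 into
   beta_k = alpha_k f0(t_k) and gamma_k = alpha_k f1(t_k), so the nodes are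
   forced by (f1/f0)(t_k) = gamma_k/beta_k.  As every p_{n,k} but p_{n,0}
   vanishes at a (and every one but p_{n,n} at b), f1/f0 takes the values
   gamma_0/beta_0 at a and gamma_n/beta_n at b.  Being strictly increasing it
   is injective, which gives uniqueness, and the intermediate value theorem,
   applied to f1 - c f0 = sum_k (gamma_k - c beta_k) p_{n,k}, produces a node
   for every c in between.  Over C this function is real-valued on [a,b], and
   the theorem is applied to its real part, a real combination of the
   real-valued p_{n,k}. *)

Lemma IVT_sign (R : realType) (f : R -> R) (a b : R) :
  a <= b -> {within `[a, b], continuous f} -> f a <= 0 -> 0 <= f b ->
  exists2 c, a <= c <= b & f c = 0.
Proof.
move=> ab cf fa fb; have [|c cab fc] := @IVT R f a b 0 ab cf.
  by rewrite ge_min fa le_max fb orbT.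
by exists c => //; move: cab; rewrite in_itv.
Qed.

Section ZeroOrder.
Variables (R : realType) (K : numFieldType) (emb : R -> K).

Lemma zero_of_order_gt0 (a b c : R) (f : R -> K) (k : nat) :
  (0 < k)%N -> zero_of_order emb a b f c k -> f c = 0.
Proof. by move=> k0 [D [[<- _] [Dc _]]]; apply: Dc. Qed.

Lemma zero_of_order0 (a b c : R) (f : R -> K) :
  zero_of_order emb a b f c 0 -> f c != 0.
Proof. by case=> D [[<- _] [_]]. Qed.

End ZeroOrder.

Section ScalarField.
Variables (R : realType) (K : numFieldType).
Variables (emb : {rmorphism R -> K}) (re : {additive K -> R}).
Hypothesis ler_emb : {mono emb : x y / x <= y}.
Hypothesis re_scale : forall z r, re (z * emb r) = re z * r.
Hypothesis re_nonneg : forall z, 0 <= z -> emb (re z) = z.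
Hypothesis re_norm : forall z, emb `|re z| <= `|z|.

Lemma re_ge0 z : 0 <= z -> 0 <= re z.
Proof. by move=> z0; rewrite -ler_emb rmorph0 re_nonneg. Qed.

Lemma re_le0 z : z <= 0 -> re z <= 0.
Proof. by move=> z0; rewrite -oppr_ge0 -raddfN re_ge0 // oppr_ge0. Qed.

Lemma re_real z : z \is Num.real -> emb (re z) = z.
Proof.
case/orP=> [/re_nonneg //|z0].
by rewrite -[z]opprK raddfN rmorphN re_nonneg // oppr_ge0.
Qed.

Lemma re_norm_lt z e : `|z| < emb e -> `|re z| < e.
Proof. by move=> ze; rewrite -(leW_mono ler_emb); apply: le_lt_trans ze. Qed.

Lemma within_continuous_re (a b : R) (h : R -> K) :
  cont_on emb a b h -> {within `[a, b], continuous (fun x => re (h x))}.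
Proof.
move=> ch; apply/subspace_continuousP => x xab.
apply/cvgrPdist_lt => e e0.
have [d d0 hd] := ch x (xab : a <= x <= b) e e0.
rewrite near_withinE; apply/nbhs_ballP; exists d => //= y xy yab.
rewrite distrC -raddfB; apply/re_norm_lt/hd; first by move: yab; rewrite in_itv.
by move: xy; rewrite /ball /= distrC.
Qed.

Lemma within_continuous_re_comb (a b : R) (I : finType) (c : I -> R)
    (h : I -> R -> K) :
  (forall i, cont_on emb a b (h i)) ->
  {within `[a, b], continuous (fun x => \sum_i c i * re (h i x))}.
Proof.
move=> ch; apply: continuous_big => [|i _ x]; first exact: add_continuous.
have hc := within_continuous_re (ch i).
exact (continuousM (@cst_continuous _ _ (c i) x) (hc x)).
Qed.

Section Bernstein.
Variables (a b : R) (n : nat) (p : 'I_n.+1 -> R -> K).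
Hypotheses (ab : a < b) (hp : nonneg_bernstein_basis emb a b p).

Let aab : a <= a <= b. Proof. by rewrite lexx ltW. Qed.
Let bab : a <= b <= b. Proof. by rewrite lexx ltW. Qed.

Lemma bernstein_cont k : cont_on emb a b (p k).
Proof. by case: hp => /(_ k) [D [[<- _] cD]] _ _ _ _; apply: cD. Qed.

Lemma bernstein_coef_inj (u v : 'I_n.+1 -> K) :
  (forall x, a <= x <= b -> \sum_k u k * p k x = \sum_k v k * p k x) -> u = v.
Proof.
case: hp => _ pind _ _ _ huv; apply/funext => k; apply/eqP; rewrite -subr_eq0.
apply/eqP; apply: (pind (fun k => u k - v k)) => x hx.
under eq_bigr do rewrite mulrBl.
by rewrite sumrB huv ?subrr.
Qed.

Lemma bernstein_sum_left (u : 'I_n.+1 -> K) :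
  \sum_k u k * p k a = u ord0 * p ord0 a.
Proof.
rewrite big_ord_recl big1 ?addr0 // => k _.
by case: hp => _ _ /(_ (lift ord0 k)) /zero_of_order_gt0 -> // _ _; rewrite mulr0.
Qed.

Lemma bernstein_sum_right (u : 'I_n.+1 -> K) :
  \sum_k u k * p k b = u ord_max * p ord_max b.
Proof.
rewrite big_ord_recr big1 => [|k _]; first exact: add0r.
case: hp => _ _ _ /(_ (widen_ord (leqnSn n) k)) /zero_of_order_gt0 -> //.
  by rewrite mulr0.
by rewrite subn_gt0 /=.
Qed.

Lemma bernstein_ratio_left (u v : 'I_n.+1 -> K) :
  (\sum_k v k * p k a) / (\sum_k u k * p k a) = v ord0 / u ord0.
Proof.
rewrite !bernstein_sum_left -mulf_div divff ?mulr1 //.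
by case: hp => _ _ /(_ ord0) /zero_of_order0.
Qed.

Lemma bernstein_ratio_right (u v : 'I_n.+1 -> K) :
  (\sum_k v k * p k b) / (\sum_k u k * p k b) = v ord_max / u ord_max.
Proof.
rewrite !bernstein_sum_right -mulf_div divff ?mulr1 //.
by case: hp => _ _ _ /(_ ord_max) /=; rewrite subnn => /zero_of_order0.
Qed.

Lemma reproduces_coef (t : 'I_n.+1 -> R) (alpha c : 'I_n.+1 -> K) (f : R -> K) :
  (forall x, a <= x <= b -> f x = \sum_k c k * p k x) ->
  reproduces a b p t alpha f -> c = (fun k => f (t k) * alpha k).
Proof. by move=> fE rf; apply: bernstein_coef_inj => x hx; rewrite rf // fE. Qed.

Lemma re_bernstein_comb (d : 'I_n.+1 -> K) x : a <= x <= b ->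
  re (\sum_k d k * p k x) = \sum_k re (d k) * re (p k x).
Proof.
case: hp => _ _ _ _ pge hx; rewrite raddf_sum; apply: eq_bigr => k _.
by rewrite -{1}(re_nonneg (pge k x hx)) re_scale.
Qed.

Section Ratio.
Variables (f0 f1 : R -> K) (beta gamma : 'I_n.+1 -> K).
Hypotheses (f0E : forall x, a <= x <= b -> f0 x = \sum_k beta k * p k x)
  (f1E : forall x, a <= x <= b -> f1 x = \sum_k gamma k * p k x)
  (f0_gt0 : forall x, a <= x <= b -> 0 < f0 x)
  (ratio_incr : forall x y, a <= x -> x < y -> y <= b -> f1 x / f0 x < f1 y / f0 y).

Local Notation ratio x := (f1 x / f0 x).

Lemma ratio_left : ratio a = gamma ord0 / beta ord0.
Proof. by rewrite f0E // f1E // bernstein_ratio_left. Qed.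

Lemma ratio_right : ratio b = gamma ord_max / beta ord_max.
Proof. by rewrite f0E // f1E // bernstein_ratio_right. Qed.

Lemma ratio_le x y : a <= x -> x <= y -> y <= b -> ratio x <= ratio y.
Proof.
by move=> ax; rewrite le_eqVlt => /predU1P[-> //|xy] yb; apply/ltW/ratio_incr.
Qed.

Lemma ratio_inj x y : a <= x <= b -> a <= y <= b -> ratio x = ratio y -> x = y.
Proof.
move=> /andP[ax xb] /andP[ay yb] exy.
case: (ltgtP x y) => // [xy|yx].
  by have := ratio_incr ax xy yb; rewrite exy ltxx.
by have := ratio_incr ay yx xb; rewrite exy ltxx.
Qed.

Lemma exists_node c : ratio a <= c <= ratio b -> exists2 t, a <= t <= b & ratio t = c.
Proof.
case/andP=> ac cb; pose d k := gamma k - c * beta k.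
have phiE x : a <= x <= b -> f1 x - c * f0 x = \sum_k d k * p k x.
  move=> hx; rewrite f0E // f1E // mulr_sumr -sumrB.
  by apply: eq_bigr => k _; rewrite mulrBl mulrA.
have f0_neq0 x : a <= x <= b -> f0 x != 0 by move=> hx; rewrite gt_eqF ?f0_gt0.
have phi_ratio x : a <= x <= b -> f1 x - c * f0 x = f0 x * (ratio x - c).
  by move=> hx; rewrite mulrBr mulrCA divff ?mulr1 ?f0_neq0 // [c * _]mulrC.
pose H x := \sum_k re (d k) * re (p k x).
have HE x : a <= x <= b -> H x = re (f1 x - c * f0 x).
  by move=> hx; rewrite phiE // re_bernstein_comb.
have [t tab Ht] : exists2 t, a <= t <= b & H t = 0.
  apply: IVT_sign (ltW ab) _ _ _.
  - exact: within_continuous_re_comb bernstein_cont.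
  - by rewrite HE // re_le0 // phi_ratio // pmulr_rle0 ?f0_gt0 // subr_le0.
  - by rewrite HE // re_ge0 // phi_ratio // pmulr_rge0 ?f0_gt0 // subr_ge0.
exists t => //; have /andP[ta tb] := tab.
have ratio_real : ratio t - c \is Num.real.
  have -> : ratio t - c = (ratio t - ratio a) - (c - ratio a).
    by rewrite opprB addrA subrK.
  by rewrite realB // ger0_real // subr_ge0 // ratio_le.
have : f0 t * (ratio t - c) = 0.
  rewrite -phi_ratio // -[LHS]re_real; first by rewrite -HE // Ht rmorph0.
  by rewrite phi_ratio // realM // gtr0_real // f0_gt0.
by move/eqP; rewrite mulf_eq0 (negbTE (f0_neq0 t tab)) subr_eq0 => /eqP.
Qed.

Section Admissible.
Variables (t : 'I_n.+1 -> R) (alpha : 'I_n.+1 -> K).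
Hypothesis adm : admissible a b p f0 f1 t alpha.

Lemma admissible_coef k : beta k = f0 (t k) * alpha k /\ gamma k = f1 (t k) * alpha k.
Proof.
case: adm => _ _ r0 r1.
by rewrite (reproduces_coef f0E r0) (reproduces_coef f1E r1).
Qed.

Lemma admissible_ratio k : gamma k / beta k = ratio (t k).
Proof.
have [-> ->] := admissible_coef k; case: adm => _ alpha_gt0 _ _.
by rewrite -mulf_div divff ?mulr1 // gt_eqF.
Qed.

Lemma admissible_necessary :
  (forall k, 0 < beta k) /\ (forall k, ratio a <= gamma k / beta k <= ratio b).
Proof.
case: adm => t_ab alpha_gt0 _ _; split=> k.
  by have [-> _] := admissible_coef k; rewrite mulr_gt0 ?f0_gt0.
have /andP[ta tb] := t_ab k.
by rewrite admissible_ratio !ratio_le ?lexx // ltW.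
Qed.

End Admissible.

Lemma admissible_sufficient :
  (forall k, 0 < beta k) -> (forall k, ratio a <= gamma k / beta k <= ratio b) ->
  exists t alpha, admissible a b p f0 f1 t alpha.
Proof.
move=> beta_gt0 range.
have node k : exists tk, a <= tk <= b /\ ratio tk = gamma k / beta k.
  by have [tk tk_ab ratio_tk] := exists_node (range k); exists tk.
have [t ht] := fin_all_exists node.
have f0t_neq0 k : f0 (t k) != 0 by rewrite gt_eqF // f0_gt0 //; case: (ht k).
exists t, (fun k => beta k / f0 (t k)); split.
- by move=> k; case: (ht k).
- by move=> k; rewrite divr_gt0 // f0_gt0 //; case: (ht k).
- move=> x hx; rewrite f0E //; apply: eq_bigr => k _.
  by rewrite mulrCA divff ?mulr1.
- move=> x hx; rewrite f1E //; apply: eq_bigr => k _.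
  by rewrite mulrCA (proj2 (ht k)) [beta k * _]mulrC divfK ?gt_eqF.
Qed.

Lemma admissible_unique t alpha t' alpha' :
  admissible a b p f0 f1 t alpha -> admissible a b p f0 f1 t' alpha' ->
  t = t' /\ alpha = alpha'.
Proof.
move=> adm adm'; have [t_ab _ _ _] := adm; have [t'_ab _ _ _] := adm'.
have ett' : t = t'.
  apply/funext => k; apply: ratio_inj => //.
  by rewrite -(admissible_ratio adm) -(admissible_ratio adm').
split=> //; apply/funext => k.
have [beta_k _] := admissible_coef adm k; have [beta_k' _] := admissible_coef adm' k.
apply: (@mulfI _ (f0 (t k))); first by rewrite gt_eqF ?f0_gt0.
by rewrite -beta_k beta_k' ett'.
Qed.

End Ratio.
End Bernstein.

Theorem theorem2_stmt_re : theorem2_stmt emb.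
Proof.
move=> a b n p f0 f1 beta gamma ab hp f0E f1E f0_gt0 incr.
rewrite -(ratio_left ab hp f0E f1E) -(ratio_right ab hp f0E f1E).
split; first split.
- by case=> t [alpha /(admissible_necessary hp f0E f1E f0_gt0 incr) []].
- case=> beta_gt0 _ _; exact: (admissible_sufficient ab hp f0E f1E f0_gt0 incr).
- exact: (admissible_unique hp f0E f1E f0_gt0 incr).
Qed.

End ScalarField.

Lemma theorem2_stmt_real (R : realType) : theorem2_stmt (K := R) id.
Proof. by apply: (@theorem2_stmt_re R R idfun idfun) => // z; rewrite lexx. Qed.

Lemma theorem2_stmt_complex (R : realType) :
  theorem2_stmt (K := R[i]) (real_complex R).
Proof.
apply: (@theorem2_stmt_re R R[i] (real_complex R) (@complex.Re R)).
- exact: lecR.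
- by move=> [x y] r /=; rewrite mulr0 subr0.
- by move=> z z_ge0; apply: RRe_real; rewrite ger0_real.
- exact: normc_ge_Re.
Qed.

Theorem theorem2 (R : realType) :
  theorem2_stmt (K := R) id /\ theorem2_stmt (K := R[i]) (real_complex R).
Proof. by split; [exact: theorem2_stmt_real | exact: theorem2_stmt_complex]. Qed.
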